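(* Let $A,B,P,Q,X,Y$ be positive words (in the letters $\sigma_1,\dots,\sigma_{n-1},x_1,\dots,x_{n-1}$, the words $A,B$ possibly empty) with $A\doteq P$, $B\doteq Q$ and $AXB\doteq PYQ$. Then $X\doteq Y$. That is, the monoid $SB_n^+$ is left and right cancellative.
   Context: Fix $n\ge 2$. The positive singular braid monoid $SB_n^+$ is the monoid with generators $\sigma_1,\dots,\sigma_{n-1},x_1,\dots,x_{n-1}$ and relations: $\sigma_i\sigma_j=\sigma_j\sigma_i$ and $x_ix_j=x_jx_i$ if $|i-j|>1$; $x_i\sigma_j=\sigma_jx_i$ if $|i-j|\ne 1$; $\sigma_i\sigma_{i+1}\sigma_i=\sigma_{i+1}\sigma_i\sigma_{i+1}$; $\sigma_i\sigma_{i+1}x_i=x_{i+1}\sigma_i\sigma_{i+1}$; $\sigma_{i+1}\sigma_ix_{i+1}=x_i\sigma_{i+1}\sigma_i$. A positive word is a word in the letters $\sigma_i,x_i$. For positive words, $A\doteq B$ means they represent the same element of $SB_n^+$. *)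

From Stdlib Require Import List Arith Relations.
Import ListNotations.

Inductive letter : Type :=
| sig : nat -> letter
| xl  : nat -> letter.

Definition word := list letter.

Definition letter_index (a : letter) : nat :=
  match a with sig i => i | xl i => i end.

Definition valid_letter (n : nat) (a : letter) : Prop :=
  1 <= letter_index a /\ letter_index a <= n - 1.

Definition positive_word (n : nat) (w : word) : Prop :=
  Forall (valid_letter n) w.

Definition far (i j : nat) : Prop := i + 1 < j \/ j + 1 < i.
Definition not_adj (i j : nat) : Prop := i <> j + 1 /\ j <> i + 1.
Definition vidx (n i : nat) : Prop := 1 <= i /\ i <= n - 1.

Inductive sb_rel (n : nat) : word -> word -> Prop :=
| r_ss : forall i j, vidx n i -> vidx n j -> far i j ->
    sb_rel n [sig i; sig j] [sig j; sig i]
| r_xx : forall i j, vidx n i -> vidx n j -> far i j ->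
    sb_rel n [xl i; xl j] [xl j; xl i]
| r_xs : forall i j, vidx n i -> vidx n j -> not_adj i j ->
    sb_rel n [xl i; sig j] [sig j; xl i]
| r_braid : forall i, vidx n i -> vidx n (i + 1) ->
    sb_rel n [sig i; sig (i + 1); sig i] [sig (i + 1); sig i; sig (i + 1)]
| r_mix1 : forall i, vidx n i -> vidx n (i + 1) ->
    sb_rel n [sig i; sig (i + 1); xl i] [xl (i + 1); sig i; sig (i + 1)]
| r_mix2 : forall i, vidx n i -> vidx n (i + 1) ->
    sb_rel n [sig (i + 1); sig i; xl (i + 1)] [xl i; sig (i + 1); sig i].

Inductive sb_step (n : nat) : word -> word -> Prop :=
| step_ctx : forall u v l r, sb_rel n l r ->
    sb_step n (u ++ l ++ v) (u ++ r ++ v).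

Definition sb_eq (n : nat) : word -> word -> Prop :=
  clos_refl_sym_trans word (sb_step n).

(* The presentation is complemented in Dehornoy's sense: every relation reads
   [a f(a,b) = b f(b,a)] with [a <> b], and each pair of initial letters occurs in at most
   one relation.  Induction on length shows that [a u ≐ b v] forces [u ≐ v] if [a = b], and
   [u ≐ f(a,b) w], [v ≐ f(b,a) w] otherwise.  The transitivity step through a third letter
   [c] needs the cube condition on [a, b, c], which is verified by right reversing.  It only
   depends on the kinds of the three letters and the relative position (equal, adjacent, far
   apart) of their indices, so checking it by computation for indices below 5 covers all
   triples.  Right cancellation follows because reversing words maps relations to relations. *)

From Stdlib Require Import List Arith Relations Lia Bool.
Import ListNotations.

Definition letter_eqb (a b : letter) : bool :=
  match a, b with
  | sig i, sig j | xl i, xl j => i =? j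
  | _, _ => false
  end.

Lemma letter_eqb_spec a b : reflect (a = b) (letter_eqb a b).
Proof.
  destruct a as [i|i], b as [j|j]; simpl; try (constructor; congruence).
  all: destruct (Nat.eqb_spec i j); constructor; congruence.
Qed.

Definition adjacent (i j : nat) : bool := (j =? i + 1) || (i =? j + 1).

(* [complement a b = Some p] when some relation reads [a p = b q]; [None] when no
   relation has [a] and [b] as its two initial letters. *)
Definition complement (a b : letter) : option word :=
  match a, b with
  | sig i, sig j =>
      if i =? j then None else if adjacent i j then Some [sig j; sig i] else Some [sig j]
  | xl i, xl j => if (i =? j) || adjacent i j then None else Some [xl j]
  | sig i, xl j => if adjacent i j then Some [sig j; xl i] else Some [xl j]
  | xl i, sig j => if adjacent i j then Some [sig j; sig i] else Some [sig j]
  end.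

Definition indices_in (I : nat -> Prop) (w : word) : Prop :=
  Forall (fun a => I (letter_index a)) w.

Lemma complement_indices (I : nat -> Prop) a b p :
  I (letter_index a) -> I (letter_index b) -> complement a b = Some p -> indices_in I p.
Proof.
  intros Ha Hb; unfold indices_in.
  destruct a as [i|i], b as [j|j]; simpl in *;
    repeat match goal with |- context [if ?c then _ else _] => destruct c end;
    intro H; inversion H; subst; repeat constructor; assumption.
Qed.

Inductive reversal : Type :=
| Stuck
| OutOfFuel
| Reversed (q' p' : word).

(* Right reversing of [p^-1 q]: on success, [p q' = q p'] in the monoid. *)
Fixpoint reverse (fuel : nat) (p q : word) {struct fuel} : reversal :=
  match p, q with
  | [], _ => Reversed q []
  | _, [] => Reversed [] p
  | d :: p1, e :: q1 =>
    match fuel with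
    | 0 => OutOfFuel
    | S fuel =>
      if letter_eqb d e then reverse fuel p1 q1 else
      match complement d e, complement e d with
      | Some x, Some y =>
        match reverse fuel p1 x with
        | Reversed x' p2 =>
          match reverse fuel y q1 with
          | Reversed q2 y' =>
            match reverse fuel p2 q2 with
            | Reversed q3 p3 => Reversed (x' ++ q3) (y' ++ p3)
            | r => r
            end
          | r => r
          end
        | r => r
        end
      | _, _ => Stuck
      end
    end
  end.

Lemma reverse_invariant (R : word -> word -> word -> word -> Prop) :
  (forall q, R [] q q []) ->
  (forall p, R p [] [] p) ->
  (forall d p1 q1 q' p', R p1 q1 q' p' -> R (d :: p1) (d :: q1) q' p') ->
  (forall d e p1 q1 x y x' p2 q2 y' q3 p3,
     complement d e = Some x -> complement e d = Some y ->
     R p1 x x' p2 -> R y q1 q2 y' -> R p2 q2 q3 p3 ->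
     R (d :: p1) (e :: q1) (x' ++ q3) (y' ++ p3)) ->
  forall fuel p q q' p', reverse fuel p q = Reversed q' p' -> R p q q' p'.
Proof.
  intros Rnil_l Rnil_r Rsame Rcompl fuel.
  induction fuel as [|fuel IH]; intros [|d p1] [|e q1] q' p' Hrev; simpl in Hrev;
    try (injection Hrev as <- <-; auto); try discriminate.
  destruct (letter_eqb_spec d e) as [<-|_]; [auto|].
  destruct (complement d e) as [x|] eqn:Ex; [|discriminate].
  destruct (complement e d) as [y|] eqn:Ey; [|discriminate].
  destruct (reverse fuel p1 x) as [| |x' p2] eqn:R1; try discriminate.
  destruct (reverse fuel y q1) as [| |q2 y'] eqn:R2; try discriminate.
  destruct (reverse fuel p2 q2) as [| |q3 p3] eqn:R3; try discriminate.
  injection Hrev as <- <-; eauto.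
Qed.

Lemma reverse_indices (I : nat -> Prop) fuel p q q' p' :
  reverse fuel p q = Reversed q' p' -> indices_in I p -> indices_in I q ->
  indices_in I q' /\ indices_in I p'.
Proof.
  revert fuel p q q' p'.
  apply (reverse_invariant (fun p q q' p' =>
    indices_in I p -> indices_in I q -> indices_in I q' /\ indices_in I p'));
    unfold indices_in; [auto | auto | intros * IH Hp Hq; inversion Hp; inversion Hq; auto |].
  intros d e p1 q1 x y x' p2 q2 y' q3 p3 Ex Ey IH1 IH2 IH3 Hp Hq.
  inversion Hp as [|? ? Hd Hp1]; inversion Hq as [|? ? He Hq1]; subst.
  destruct (IH1 Hp1 (complement_indices I d e x Hd He Ex)) as [Hx' Hp2].
  destruct (IH2 (complement_indices I e d y He Hd Ey) Hq1) as [Hq2 Hy'].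
  destruct (IH3 Hp2 Hq2) as [Hq3 Hp3].
  split; apply Forall_app; auto.
Qed.

(* Which relations hold between two letters depends only on this triple. *)
Definition relpos (i j : nat) : bool * bool * bool := (i =? j, i =? j + 1, j =? i + 1).

Definition rename (g : nat -> nat) (a : letter) : letter :=
  match a with sig i => sig (g i) | xl i => xl (g i) end.

Definition map_reversal (g : nat -> nat) (r : reversal) : reversal :=
  match r with
  | Reversed q' p' => Reversed (map (rename g) q') (map (rename g) p')
  | r => r
  end.

Definition cube_fuel := 6.

Definition cube_check (a b c : letter) : bool :=
  if letter_eqb a b || letter_eqb a c || letter_eqb b c then true else
  match complement c a, complement c b, complement a c, complement b c with
  | Some pca, Some pcb, Some pac, Some pbc =>
    match reverse cube_fuel pca pcb with
    | Stuck => true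
    | OutOfFuel => false
    | Reversed q' p' =>
      match complement a b, complement b a with
      | Some p, Some q =>
        match reverse cube_fuel p (pac ++ q') with
        | Reversed k [] =>
          match reverse cube_fuel (pbc ++ p') (q ++ k) with
          | Reversed [] [] => true
          | _ => false
          end
        | _ => false
        end
      | _, _ => false
      end
    end
  | _, _, _, _ => true
  end.

(* From [a u = c w = b v] with [u = f(a,c) t1], [w = f(c,a) t1 = f(c,b) t2] and
   [v = f(b,c) t2], reversing [f(c,a)^-1 f(c,b)] yields [t1 = q' s] and [t2 = p' s];
   the last two reversals then show [f(a,c) q' = f(a,b) k] and [f(b,c) p' = f(b,a) k]. *)
Definition cube_condition (a b c : letter) : Prop :=
  a <> b -> a <> c -> b <> c ->
  forall pca pcb pac pbc,
  complement c a = Some pca -> complement c b = Some pcb ->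
  complement a c = Some pac -> complement b c = Some pbc ->
  reverse cube_fuel pca pcb = Stuck \/
  exists q' p' p q k, reverse cube_fuel pca pcb = Reversed q' p' /\
    complement a b = Some p /\ complement b a = Some q /\
    reverse cube_fuel p (pac ++ q') = Reversed k [] /\
    reverse cube_fuel (pbc ++ p') (q ++ k) = Reversed [] [].

Lemma cube_check_sound a b c : cube_check a b c = true -> cube_condition a b c.
Proof.
  unfold cube_check, cube_condition.
  intros H Hab Hac Hbc pca pcb pac pbc Eca Ecb Eac Ebc.
  destruct (letter_eqb_spec a b), (letter_eqb_spec a c), (letter_eqb_spec b c);
    try contradiction; cbv [orb] in H.
  rewrite Eca, Ecb, Eac, Ebc in H.
  destruct (reverse cube_fuel pca pcb) as [| |q' p'] eqn:R1;
    [now left | cbv beta iota in H; discriminate H | right].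
  destruct (complement a b) as [p|] eqn:Ep, (complement b a) as [q|] eqn:Eq;
    try (cbv beta iota in H; discriminate H).
  destruct (reverse cube_fuel p (pac ++ q')) as [| |k [|]] eqn:R2;
    try (cbv beta iota in H; discriminate H).
  destruct (reverse cube_fuel (pbc ++ p') (q ++ k)) as [| |[|] [|]] eqn:R3;
    try (cbv beta iota in H; discriminate H).
  exists q', p', p, q, k; auto.
Qed.

Section Renaming.
Variable g : nat -> nat.
Variable S : list nat.
Hypothesis g_relpos : forall i j, In i S -> In j S -> relpos (g i) (g j) = relpos i j.

Local Notation in_S := (indices_in (fun i => In i S)).
Let complement_in_S := complement_indices (fun i => In i S).
Let reverse_in_S := reverse_indices (fun i => In i S).

Lemma letter_eqb_rename a b : In (letter_index a) S -> In (letter_index b) S ->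
  letter_eqb (rename g a) (rename g b) = letter_eqb a b.
Proof.
  intros Ha Hb; generalize (g_relpos _ _ Ha Hb); unfold relpos.
  destruct a, b; simpl; intro H; inversion H; auto.
Qed.

Lemma complement_rename a b : In (letter_index a) S -> In (letter_index b) S ->
  complement (rename g a) (rename g b) = option_map (map (rename g)) (complement a b).
Proof.
  intros Ha Hb; generalize (g_relpos _ _ Ha Hb); unfold relpos.
  destruct a as [i|i], b as [j|j]; simpl; unfold adjacent; intro H; inversion H as [[H1 H2 H3]];
    rewrite ?H1, ?H2, ?H3; clear;
    repeat match goal with |- context [if ?c then _ else _] => destruct c end; reflexivity.
Qed.

Lemma reverse_rename fuel : forall p q, in_S p -> in_S q ->
  reverse fuel (map (rename g) p) (map (rename g) q) = map_reversal g (reverse fuel p q).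
Proof.
  induction fuel as [|fuel IH]; intros [|d p1] [|e q1] Hp Hq; try reflexivity.
  inversion Hp as [|? ? Hd Hp1]; inversion Hq as [|? ? He Hq1]; subst.
  simpl; rewrite letter_eqb_rename by assumption.
  destruct (letter_eqb d e); [auto|].
  rewrite !complement_rename by assumption.
  destruct (complement d e) as [x|] eqn:Ex; [|reflexivity].
  destruct (complement e d) as [y|] eqn:Ey; [|reflexivity]; simpl.
  pose proof (complement_in_S _ _ _ Hd He Ex) as Hx.
  pose proof (complement_in_S _ _ _ He Hd Ey) as Hy.
  rewrite IH by assumption.
  destruct (reverse fuel p1 x) as [| |x' p2] eqn:R1; try reflexivity; simpl.
  destruct (reverse_in_S _ _ _ _ _ R1 Hp1 Hx) as [_ Hp2].
  rewrite IH by assumption.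
  destruct (reverse fuel y q1) as [| |q2 y'] eqn:R2; try reflexivity; simpl.
  destruct (reverse_in_S _ _ _ _ _ R2 Hy Hq1) as [Hq2 _].
  rewrite IH by assumption.
  destruct (reverse fuel p2 q2); try reflexivity; simpl.
  rewrite !map_app; reflexivity.
Qed.

Lemma cube_check_rename a b c :
  In (letter_index a) S -> In (letter_index b) S -> In (letter_index c) S ->
  cube_check (rename g a) (rename g b) (rename g c) = cube_check a b c.
Proof.
  intros Ha Hb Hc; unfold cube_check.
  rewrite !letter_eqb_rename by assumption.
  destruct (letter_eqb a b || letter_eqb a c || letter_eqb b c); [reflexivity|].
  rewrite !complement_rename by assumption.
  destruct (complement c a) as [pca|] eqn:Eca; [|reflexivity].
  destruct (complement c b) as [pcb|] eqn:Ecb;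
    [|destruct (complement a c), (complement b c); reflexivity].
  destruct (complement a c) as [pac|] eqn:Eac; [|destruct (complement b c); reflexivity].
  destruct (complement b c) as [pbc|] eqn:Ebc; [|reflexivity].
  pose proof (complement_in_S _ _ _ Hc Ha Eca) as Hca.
  pose proof (complement_in_S _ _ _ Hc Hb Ecb) as Hcb.
  pose proof (complement_in_S _ _ _ Ha Hc Eac) as Hac.
  pose proof (complement_in_S _ _ _ Hb Hc Ebc) as Hbc.
  cbn [option_map]; rewrite reverse_rename by assumption.
  destruct (reverse cube_fuel pca pcb) as [| |q' p'] eqn:R1; try reflexivity; cbn [map_reversal].
  destruct (reverse_in_S _ _ _ _ _ R1 Hca Hcb) as [Hq' Hp'].
  destruct (complement a b) as [p|] eqn:Eab; [|destruct (complement b a); reflexivity].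
  destruct (complement b a) as [q|] eqn:Eba; [|reflexivity].
  pose proof (complement_in_S _ _ _ Ha Hb Eab) as Hab.
  pose proof (complement_in_S _ _ _ Hb Ha Eba) as Hba.
  assert (Hacq' : in_S (pac ++ q')) by (apply Forall_app; auto).
  cbn [option_map]; rewrite <- map_app, reverse_rename by assumption.
  destruct (reverse cube_fuel p (pac ++ q')) as [| |k [|]] eqn:R2;
    try reflexivity; cbn [map_reversal].
  destruct (reverse_in_S _ _ _ _ _ R2 Hab Hacq') as [Hk _].
  rewrite <- !map_app, reverse_rename by (apply Forall_app; auto).
  destruct (reverse cube_fuel (pbc ++ p') (q ++ k)) as [| |[|] [|]]; reflexivity.
Qed.

End Renaming.

Definition small_letters : list letter := map sig (seq 0 5) ++ map xl (seq 0 5).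

Lemma cube_check_small : forall a b c, In a small_letters -> In b small_letters ->
  In c small_letters -> cube_check a b c = true.
Proof.
  assert (Hall : forallb (fun a => forallb (fun b => forallb (fun c => cube_check a b c)
    small_letters) small_letters) small_letters = true) by (vm_compute; reflexivity).
  intros a b c Ha Hb Hc.
  rewrite forallb_forall in Hall; specialize (Hall a Ha).
  rewrite forallb_forall in Hall; specialize (Hall b Hb).
  rewrite forallb_forall in Hall; exact (Hall c Hc).
Qed.

Lemma relpos_diag i : relpos i i = (true, false, false).
Proof.
  unfold relpos; rewrite Nat.eqb_refl.
  destruct (Nat.eqb_spec i (i + 1)); [lia | reflexivity].
Qed.

Lemma relpos_sym i j : relpos j i = let '(e, l, r) := relpos i j in (e, r, l).
Proof. unfold relpos; rewrite Nat.eqb_sym; reflexivity. Qed.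

Lemma relpos_eq i j i' j' : relpos i j = relpos i' j' -> i = j -> i' = j'.
Proof.
  unfold relpos; intros H ->; injection H as H _ _.
  rewrite Nat.eqb_refl in H; apply Nat.eqb_eq; auto.
Qed.

Lemma small_triple i j k : exists i0 j0 k0, i0 < 5 /\ j0 < 5 /\ k0 < 5 /\
  relpos i0 j0 = relpos i j /\ relpos j0 k0 = relpos j k /\ relpos i0 k0 = relpos i k.
Proof.
  unfold relpos.
  repeat match goal with |- context [?x =? ?y] =>
    destruct (Nat.eqb_spec x y) end;
    try (exfalso; lia);
    solve [ do 3 (exists 0 + exists 1 + exists 2 + exists 3 + exists 4);
            repeat split; first [reflexivity | apply Nat.ltb_lt; reflexivity] ].
Qed.

Definition with_index (a : letter) (i : nat) : letter :=
  match a with sig _ => sig i | xl _ => xl i end.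

Lemma letter_index_with_index a i : letter_index (with_index a i) = i.
Proof. destruct a; reflexivity. Qed.

Lemma rename_with_index g a i : g i = letter_index a -> rename g (with_index a i) = a.
Proof. destruct a; simpl; intros ->; reflexivity. Qed.

Lemma with_index_small a i : i < 5 -> In (with_index a i) small_letters.
Proof.
  intro Hi; unfold small_letters; apply in_or_app.
  destruct a; [left | right]; apply in_map, in_seq; lia.
Qed.

Lemma rename_to_small a b c : exists g a0 b0 c0,
  a = rename g a0 /\ b = rename g b0 /\ c = rename g c0 /\
  In a0 small_letters /\ In b0 small_letters /\ In c0 small_letters /\
  forall i j, In i [letter_index a0; letter_index b0; letter_index c0] ->
              In j [letter_index a0; letter_index b0; letter_index c0] ->
              relpos (g i) (g j) = relpos i j.
Proof.
  destruct (small_triple (letter_index a) (letter_index b) (letter_index c))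
    as (i0 & j0 & k0 & Hi0 & Hj0 & Hk0 & Hij & Hjk & Hik).
  set (g m := if m =? i0 then letter_index a else if m =? j0 then letter_index b
              else letter_index c).
  assert (Gi : g i0 = letter_index a) by (unfold g; rewrite Nat.eqb_refl; reflexivity).
  assert (Gj : g j0 = letter_index b).
  { unfold g; destruct (Nat.eqb_spec j0 i0) as [->|]; [|rewrite Nat.eqb_refl; reflexivity].
    apply (relpos_eq i0 i0); auto. }
  assert (Gk : g k0 = letter_index c).
  { unfold g; destruct (Nat.eqb_spec k0 i0) as [->|]; [apply (relpos_eq i0 i0); auto|].
    destruct (Nat.eqb_spec k0 j0) as [->|]; [apply (relpos_eq j0 j0); auto|].
    reflexivity. }
  exists g, (with_index a i0), (with_index b j0), (with_index c k0).
  rewrite !letter_index_with_index.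
  repeat split; auto using with_index_small; try (symmetry; apply rename_with_index; assumption).
  intros i j [<-|[<-|[<-|[]]]] [<-|[<-|[<-|[]]]]; rewrite ?Gi, ?Gj, ?Gk;
    first [ rewrite !relpos_diag; reflexivity
          | symmetry; assumption
          | rewrite relpos_sym; symmetry; rewrite relpos_sym;
            rewrite ?Hij, ?Hjk, ?Hik; reflexivity ].
Qed.

Lemma cube_condition_all a b c : cube_condition a b c.
Proof.
  destruct (rename_to_small a b c) as (g & a0 & b0 & c0 & -> & -> & -> & Ha & Hb & Hc & Hg).
  apply cube_check_sound.
  rewrite (cube_check_rename g _ Hg) by (simpl; auto).
  apply cube_check_small; assumption.
Qed.

Section Cancellation.
Variable n : nat.
Local Notation "u ≐ v" := (sb_eq n u v) (at level 70).
Local Notation positive := (positive_word n).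
Local Notation valid := (valid_letter n).

Lemma sb_eq_rel l r : sb_rel n l r -> l ≐ r.
Proof.
  intro Hr; apply rst_step.
  rewrite <- (app_nil_r l), <- (app_nil_r r); exact (step_ctx n [] [] l r Hr).
Qed.

Lemma sb_eq_context w1 w2 u v : u ≐ v -> w1 ++ u ++ w2 ≐ w1 ++ v ++ w2.
Proof.
  induction 1 as [u v [u0 v0 l r Hr] | | |].
  - apply rst_step; pose proof (step_ctx n (w1 ++ u0) (v0 ++ w2) l r Hr) as H.
    rewrite <- !app_assoc in *; exact H.
  - apply rst_refl.
  - apply rst_sym; assumption.
  - eapply rst_trans; eassumption.
Qed.

Lemma sb_eq_app_l w u v : u ≐ v -> w ++ u ≐ w ++ v.
Proof. intro H; rewrite <- (app_nil_r u), <- (app_nil_r v); apply sb_eq_context, H. Qed.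

Lemma sb_eq_app_r w u v : u ≐ v -> u ++ w ≐ v ++ w.
Proof. intro H; exact (sb_eq_context [] w u v H). Qed.

Lemma sb_eq_app u v u' v' : u ≐ u' -> v ≐ v' -> u ++ v ≐ u' ++ v'.
Proof. intros; eapply rst_trans; [apply sb_eq_app_r | apply sb_eq_app_l]; eassumption. Qed.

Lemma sb_eq_length u v : u ≐ v -> length u = length v.
Proof.
  induction 1 as [u v [u0 v0 l r Hr] | | |]; try congruence.
  rewrite !length_app; destruct Hr; reflexivity.
Qed.

Lemma sb_rel_positive l r : sb_rel n l r -> positive l /\ positive r.
Proof.
  unfold positive_word, valid_letter.
  destruct 1; unfold vidx in *; simpl in *; split; repeat constructor; simpl; lia.
Qed.

Lemma sb_eq_positive u v : u ≐ v -> positive u <-> positive v.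
Proof.
  induction 1 as [u v [u0 v0 l r Hr] | | |]; try tauto.
  apply sb_rel_positive in Hr; unfold positive_word in *; rewrite !Forall_app; tauto.
Qed.

Lemma positive_app u v : positive u -> positive v -> positive (u ++ v).
Proof. intros Hu Hv; apply Forall_app; split; assumption. Qed.

Lemma complement_positive a b p : valid a -> valid b -> complement a b = Some p -> positive p.
Proof. exact (complement_indices (vidx n) a b p). Qed.

Lemma complement_sound a b p q : valid a -> valid b ->
  complement a b = Some p -> complement b a = Some q -> a :: p ≐ b :: q.
Proof.
  unfold valid_letter, complement, adjacent.
  destruct a as [i|i], b as [j|j]; simpl; intros Ha Hb Hp Hq;
    repeat match goal with H : context [?x =? ?y] |- _ => destruct (Nat.eqb_spec x y) end;
    simpl in *; try discriminate; injection Hp as <-; injection Hq as <-; subst; try lia;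
    solve [ apply sb_eq_rel; constructor; unfold vidx, far, not_adj; lia
          | apply rst_sym, sb_eq_rel; constructor; unfold vidx, far, not_adj; lia ].
Qed.

Lemma sb_rel_complement l r : sb_rel n l r -> exists a b p q,
  l = a :: p /\ r = b :: q /\ a <> b /\ complement a b = Some p /\ complement b a = Some q.
Proof.
  destruct 1; unfold vidx, far, not_adj in *; do 4 eexists; do 2 (split; [reflexivity|]);
    (split; [intro Hc; inversion Hc; lia|]); unfold complement, adjacent;
    repeat match goal with |- context [?x =? ?y] => destruct (Nat.eqb_spec x y) end;
    simpl; try lia; split; reflexivity.
Qed.

Lemma reverse_sound fuel p q q' p' : reverse fuel p q = Reversed q' p' ->
  positive p -> positive q -> positive q' /\ positive p' /\ p ++ q' ≐ q ++ p'.
Proof.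
  revert fuel p q q' p'.
  apply (reverse_invariant (fun p q q' p' =>
    positive p -> positive q -> positive q' /\ positive p' /\ p ++ q' ≐ q ++ p')).
  - intros q _ Hq; rewrite app_nil_r; split; [assumption | split; [constructor | apply rst_refl]].
  - intros p Hp _; rewrite app_nil_r; split; [constructor | split; [assumption | apply rst_refl]].
  - intros d p1 q1 q' p' IH Hp Hq; inversion Hp; inversion Hq; subst.
    destruct IH as (? & ? & ?); auto; repeat split; auto; apply (sb_eq_app_l [d]); assumption.
  - intros d e p1 q1 x y x' p2 q2 y' q3 p3 Ex Ey IH1 IH2 IH3 Hp Hq.
    inversion Hp as [|? ? Hd Hp1]; inversion Hq as [|? ? He Hq1]; subst.
    pose proof (complement_positive _ _ _ Hd He Ex) as Hx.
    pose proof (complement_positive _ _ _ He Hd Ey) as Hy.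
    destruct (IH1 Hp1 Hx) as (Hx' & Hp2 & E1).
    destruct (IH2 Hy Hq1) as (Hq2 & Hy' & E2).
    destruct (IH3 Hp2 Hq2) as (Hq3 & Hp3 & E3).
    split; [apply positive_app; assumption|]; split; [apply positive_app; assumption|].
    change (d :: p1 ++ x' ++ q3 ≐ e :: q1 ++ y' ++ p3).
    apply rst_trans with (d :: x ++ p2 ++ q3).
    { rewrite app_assoc, (app_assoc x).
      apply (sb_eq_app_r q3 (d :: _) (d :: _)), (sb_eq_app_l [d]), E1. }
    apply rst_trans with (d :: x ++ q2 ++ p3).
    { apply (sb_eq_app_l (d :: x)), E3. }
    apply rst_trans with (e :: y ++ q2 ++ p3).
    { rewrite !app_comm_cons, !app_assoc.
      apply sb_eq_app_r, sb_eq_app_r, complement_sound; assumption. }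
    rewrite app_assoc, (app_assoc q1).
    apply (sb_eq_app_r p3 (e :: _) (e :: _)), (sb_eq_app_l [e]), E2.
Qed.

Definition complement_split (a b : letter) (u v : word) : Prop :=
  exists p q w, complement a b = Some p /\ complement b a = Some q /\ u ≐ p ++ w /\ v ≐ q ++ w.

Definition head_split (x y : word) : Prop :=
  match x, y with
  | a :: u, b :: v => (a = b -> u ≐ v) /\ (a <> b -> complement_split a b u v)
  | _, _ => True
  end.

Lemma head_split_refl x : head_split x x.
Proof. destruct x; simpl; split; [intros; apply rst_refl | congruence]. Qed.

Lemma head_split_sym x y : head_split x y -> head_split y x.
Proof.
  destruct x as [|a u], y as [|b v]; simpl; auto.
  intros [Hsame Hdiff]; split.
  - intros ->; apply rst_sym, Hsame; reflexivity.
  - intro Hba; destruct (Hdiff (not_eq_sym Hba)) as (p & q & w & Ep & Eq & Hu & Hv).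
    exists q, p, w; auto.
Qed.

Lemma head_split_step x y : sb_step n x y -> head_split x y.
Proof.
  intros [[|d u0] v0 l r Hr]; simpl.
  - destruct (sb_rel_complement l r Hr) as (a & b & p & q & -> & -> & Hab & Ep & Eq).
    split; [contradiction|]; intros _.
    exists p, q, v0; repeat split; auto; apply rst_refl.
  - split; [|congruence]; intros _; apply rst_step; constructor; exact Hr.
Qed.

Definition bounded_positive (L : nat) (w : word) : Prop := length w < L /\ positive w.

Lemma bounded_positive_eq L u v : u ≐ v -> bounded_positive L u -> bounded_positive L v.
Proof.
  intros H [Hl Hp]; split.
  - rewrite <- (sb_eq_length _ _ H); exact Hl.
  - apply (sb_eq_positive _ _ H), Hp.
Qed.

Lemma bounded_positive_app_r L u v : bounded_positive L (u ++ v) -> bounded_positive L v.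
Proof.
  intros [Hl Hp]; split.
  - rewrite length_app in Hl; lia.
  - apply Forall_app in Hp; tauto.
Qed.

Lemma bounded_positive_tail L a u : bounded_positive (S L) (a :: u) -> bounded_positive L u.
Proof. intros [Hl Hp]; inversion Hp; split; simpl in Hl; [lia | assumption]. Qed.

Definition reversal_spec (r : reversal) (t1 t2 : word) : Prop :=
  match r with
  | Stuck => False
  | OutOfFuel => True
  | Reversed q' p' => exists s, t1 ≐ q' ++ s /\ t2 ≐ p' ++ s
  end.

Section InductionStep.
Variable L : nat.
Hypothesis head_split_shorter :
  forall x y, bounded_positive L x -> x ≐ y -> head_split x y.

Lemma sb_eq_app_inv_head_bounded p t1 t2 :
  bounded_positive L (p ++ t1) -> p ++ t1 ≐ p ++ t2 -> t1 ≐ t2.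
Proof.
  induction p as [|d p IH]; intros Hb H; [exact H|].
  apply IH; [apply (bounded_positive_app_r L [d]); exact Hb|].
  apply (head_split_shorter _ _ Hb H); reflexivity.
Qed.

Lemma reverse_complete fuel : forall p q t1 t2, bounded_positive L (p ++ t1) ->
  p ++ t1 ≐ q ++ t2 -> reversal_spec (reverse fuel p q) t1 t2.
Proof.
  induction fuel as [|fuel IH]; intros [|d p1] [|e q1] t1 t2 Hb H; simpl in *;
    try solve [ exact I
              | exists t2; split; [exact H | apply rst_refl]
              | exists t1; split; [apply rst_refl | apply rst_sym, H] ].
  destruct (head_split_shorter _ _ Hb H) as [Hsame Hdiff].
  pose proof (bounded_positive_app_r L [d] _ Hb) as Hb1.
  destruct (letter_eqb_spec d e) as [<-|Hde]; [apply IH; auto|].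
  destruct (Hdiff Hde) as (x & y & r & -> & -> & Hxr & Hyr).
  pose proof (IH p1 x t1 r Hb1 Hxr) as R1.
  destruct (reverse fuel p1 x) as [| |x' p2]; try exact R1.
  destruct R1 as (s1 & Ht1 & Hr1).
  assert (Hbyr : bounded_positive L (y ++ r)).
  { apply (bounded_positive_eq L (q1 ++ t2)); [exact Hyr|].
    apply (bounded_positive_app_r L [e]), (bounded_positive_eq L _ _ H Hb). }
  pose proof (IH y q1 r t2 Hbyr (rst_sym _ _ _ _ Hyr)) as R2.
  destruct (reverse fuel y q1) as [| |q2 y']; try exact R2.
  destruct R2 as (s2 & Hr2 & Ht2).
  assert (Hbp2 : bounded_positive L (p2 ++ s1)).
  { apply (bounded_positive_eq L r); [exact Hr1|].
    apply (bounded_positive_app_r L x), (bounded_positive_eq L _ _ Hxr Hb1). }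
  pose proof (IH p2 q2 s1 s2 Hbp2 (rst_trans _ _ _ _ _ (rst_sym _ _ _ _ Hr1) Hr2)) as R3.
  destruct (reverse fuel p2 q2) as [| |q3 p3]; try exact R3.
  destruct R3 as (s & Hs1 & Hs2).
  exists s; rewrite <- !app_assoc; split.
  - apply rst_trans with (x' ++ s1); [exact Ht1 | apply sb_eq_app_l, Hs1].
  - apply rst_trans with (y' ++ s2); [exact Ht2 | apply sb_eq_app_l, Hs2].
Qed.

Lemma complement_split_cancel a c u w v : bounded_positive L w ->
  complement_split a c u w -> complement_split c a w v -> u ≐ v.
Proof.
  intros Hw (pac & pca & t1 & Eac & Eca & Hu & Hw1) (pca' & pac' & t2 & Eca' & Eac' & Hw2 & Hv).
  rewrite Eca in Eca'; injection Eca' as <-.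
  rewrite Eac in Eac'; injection Eac' as <-.
  assert (Ht : t1 ≐ t2).
  { apply (sb_eq_app_inv_head_bounded pca); [exact (bounded_positive_eq L _ _ Hw1 Hw)|].
    apply rst_trans with w; [apply rst_sym|]; assumption. }
  apply rst_trans with (pac ++ t1); [exact Hu|].
  apply rst_trans with (pac ++ t2); [apply sb_eq_app_l, Ht | apply rst_sym, Hv].
Qed.

Lemma complement_split_trans a b c u w v :
  a <> b -> a <> c -> c <> b -> valid a -> valid b -> valid c -> bounded_positive L w ->
  complement_split a c u w -> complement_split c b w v -> complement_split a b u v.
Proof.
  intros Hab Hac Hcb Va Vb Vc Hw (pac & pca & t1 & Eac & Eca & Hu & Hw1)
    (pcb & pbc & t2 & Ecb & Ebc & Hw2 & Hv).
  assert (Ht : pca ++ t1 ≐ pcb ++ t2) by (apply rst_trans with w; [apply rst_sym|]; assumption).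
  pose proof (reverse_complete cube_fuel pca pcb t1 t2
    (bounded_positive_eq L _ _ Hw1 Hw) Ht) as Hrev.
  destruct (cube_condition_all a b c Hab Hac (not_eq_sym Hcb) pca pcb pac pbc Eca Ecb Eac Ebc)
    as [Hstuck | (q' & p' & p & q & k & R1 & Ep & Eq & R2 & R3)].
  { rewrite Hstuck in Hrev; destruct Hrev. }
  rewrite R1 in Hrev; destruct Hrev as (s & Ht1 & Ht2).
  pose proof (complement_positive _ _ _ Va Vb Ep) as Pp.
  pose proof (complement_positive _ _ _ Vb Va Eq) as Pq.
  pose proof (complement_positive _ _ _ Va Vc Eac) as Ppac.
  pose proof (complement_positive _ _ _ Vb Vc Ebc) as Ppbc.
  destruct (reverse_sound _ _ _ _ _ R1 (complement_positive _ _ _ Vc Va Eca)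
    (complement_positive _ _ _ Vc Vb Ecb)) as (Pq' & Pp' & _).
  destruct (reverse_sound _ _ _ _ _ R2 Pp (positive_app _ _ Ppac Pq')) as (Pk & _ & Hk).
  destruct (reverse_sound _ _ _ _ _ R3 (positive_app _ _ Ppbc Pp') (positive_app _ _ Pq Pk))
    as (_ & _ & Hq).
  rewrite app_nil_r in Hk; rewrite !app_nil_r in Hq.
  exists p, q, (k ++ s); repeat split; auto.
  - apply rst_trans with (pac ++ t1); [exact Hu|].
    apply rst_trans with (pac ++ q' ++ s); [apply sb_eq_app_l, Ht1|].
    rewrite !app_assoc; apply sb_eq_app_r, rst_sym, Hk.
  - apply rst_trans with (pbc ++ t2); [exact Hv|].
    apply rst_trans with (pbc ++ p' ++ s); [apply sb_eq_app_l, Ht2|].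
    rewrite !app_assoc; apply sb_eq_app_r, Hq.
Qed.

Lemma head_split_trans x y z : bounded_positive (S L) y -> x ≐ y -> y ≐ z ->
  head_split x y -> head_split y z -> head_split x z.
Proof.
  intros Hy Hxy Hyz.
  pose proof (proj2 (sb_eq_positive _ _ Hxy) (proj2 Hy)) as Px.
  pose proof (proj1 (sb_eq_positive _ _ Hyz) (proj2 Hy)) as Pz.
  destruct x as [|a u]; [intros; exact I|]; destruct z as [|b v]; [intros; exact I|].
  destruct y as [|c w]; [apply sb_eq_length in Hxy; discriminate|].
  simpl; intros [Hsame1 Hdiff1] [Hsame2 Hdiff2].
  pose proof (bounded_positive_tail _ _ _ Hy) as Hw.
  destruct Hy as [_ Py].
  inversion Px as [|? ? Va _]; inversion Pz as [|? ? Vb _]; inversion Py as [|? ? Vc _].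
  destruct (letter_eqb_spec a c) as [<-|Hac]; [|destruct (letter_eqb_spec c b) as [<-|Hcb]].
  - split.
    + intros <-; apply rst_trans with w; [apply Hsame1 | apply Hsame2]; reflexivity.
    + intros Hab; destruct (Hdiff2 Hab) as (p & q & t & Ep & Eq & Hwt & Hvt).
      exists p, q, t; repeat split; auto.
      apply rst_trans with w; [apply Hsame1; reflexivity | exact Hwt].
  - split; [intros ->; contradiction|]; intros _.
    destruct (Hdiff1 Hac) as (p & q & t & Ep & Eq & Hut & Hwt).
    exists p, q, t; repeat split; auto.
    apply rst_trans with w; [apply rst_sym, Hsame2; reflexivity | exact Hwt].
  - split.
    + intros <-; exact (complement_split_cancel a c u w v Hw (Hdiff1 Hac) (Hdiff2 Hcb)).
    + intros Hab; exact (complement_split_trans a b c u w v Hab Hac Hcb Va Vb Vc Hw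
                           (Hdiff1 Hac) (Hdiff2 Hcb)).
Qed.

Lemma head_split_of_eq x y : x ≐ y -> bounded_positive (S L) x -> head_split x y.
Proof.
  induction 1 as [x y Hstep | | x y Hxy IH | x y z Hxy IHxy Hyz IHyz]; intro Hx.
  - apply head_split_step, Hstep.
  - apply head_split_refl.
  - apply head_split_sym, IH, (bounded_positive_eq _ _ _ (rst_sym _ _ _ _ Hxy) Hx).
  - pose proof (bounded_positive_eq _ _ _ Hxy Hx) as Hy.
    apply (head_split_trans x y z Hy Hxy Hyz); auto.
Qed.
End InductionStep.

Lemma head_split_all L x y : bounded_positive L x -> x ≐ y -> head_split x y.
Proof.
  revert x y; induction L as [|L IH]; intros x y Hx H.
  - destruct Hx as [Hl _]; lia.
  - exact (head_split_of_eq L IH x y H Hx).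
Qed.

Lemma sb_eq_app_inv_head w u v : positive (w ++ u) -> w ++ u ≐ w ++ v -> u ≐ v.
Proof.
  intros Hp H; apply (sb_eq_app_inv_head_bounded (S (length (w ++ u))) (head_split_all _) w);
    [split; [lia | exact Hp] | exact H].
Qed.

Lemma sb_rel_rev l r : sb_rel n l r -> sb_rel n (rev l) (rev r) \/ sb_rel n (rev r) (rev l).
Proof.
  destruct 1; simpl; [left | left | right | left | right | right]; constructor;
    unfold far, not_adj in *; auto; lia.
Qed.

Lemma sb_eq_rev u v : u ≐ v -> rev u ≐ rev v.
Proof.
  induction 1 as [u v [u0 v0 l r Hr] | | |].
  - rewrite !rev_app_distr, <- !app_assoc.
    destruct (sb_rel_rev l r Hr); [|apply rst_sym]; apply sb_eq_context, sb_eq_rel; assumption.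
  - apply rst_refl.
  - apply rst_sym; assumption.
  - eapply rst_trans; eassumption.
Qed.

Lemma sb_eq_app_inv_tail w u v : positive (u ++ w) -> u ++ w ≐ v ++ w -> u ≐ v.
Proof.
  intros Hp H; apply sb_eq_rev in H; rewrite !rev_app_distr in H.
  apply sb_eq_app_inv_head in H; [|rewrite <- rev_app_distr; apply Forall_rev, Hp].
  rewrite <- (rev_involutive u), <- (rev_involutive v); apply sb_eq_rev, H.
Qed.
End Cancellation.

Theorem corollary2p1 (n : nat) (Hn : 2 <= n) (A B P Q X Y : word) :
  positive_word n A -> positive_word n B -> positive_word n P ->
  positive_word n Q -> positive_word n X -> positive_word n Y ->
  sb_eq n A P -> sb_eq n B Q -> sb_eq n (A ++ X ++ B) (P ++ Y ++ Q) ->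
  sb_eq n X Y.
Proof.
  intros HA HB _ _ HX _ HAP HBQ H.
  assert (HAXB : sb_eq n (A ++ X ++ B) (A ++ Y ++ B)).
  { apply rst_trans with (P ++ Y ++ Q); [exact H|].
    apply sb_eq_app; [apply rst_sym, HAP|].
    apply sb_eq_app; [apply rst_refl | apply rst_sym, HBQ]. }
  apply sb_eq_app_inv_head in HAXB; [|repeat apply positive_app; assumption].
  apply sb_eq_app_inv_tail in HAXB; [exact HAXB|apply positive_app; assumption].
Qed.
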